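(* Let $n\le -9$ be an odd integer with $3\mid n$. Then $$q_{n+2}-q_{n+4}+(w^2-1)\big(q'_{n+2}-q'_{n+4}\big)\equiv 0\pmod 3,$$ i.e. this polynomial in $\mathbb{Z}[w]$ has all coefficients divisible by $3$, where $'$ denotes $d/dw$.
   Context: Define $q_n\in\mathbb{Z}[w]$ for odd $n\le -1$ by $q_{-1}=w^3-w^2+2w-7$, $q_{-3}=w^5-2w^4-2w^3+5w^2+3w-9$, $q_{-5}=w^7-2w^6-4w^5+8w^4+4w^3-7w^2+2w-7$, and $q_n=(w^2-1)(q_{n+2}-q_{n+4})+q_{n+6}$ for odd $n<-5$. *)

From HB Require Import structures.
From mathcomp Require Import all_boot all_order all_algebra.
Set Implicit Arguments. Unset Strict Implicit. Unset Printing Implicit Defensive.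
Import Order.TTheory GRing.Theory Num.Theory.
Local Open Scope ring_scope.

(* Qk k = q_{-(2k+1)} : q_{-1}, q_{-3}, q_{-5}, ... *)
Definition Q0 : {poly int} := 'X^3 - 'X^2 + 2%:R *: 'X - 7%:P.
Definition Q1 : {poly int} :=
  'X^5 - 2%:R *: 'X^4 - 2%:R *: 'X^3 + 5%:R *: 'X^2 + 3%:R *: 'X - 9%:P.
Definition Q2 : {poly int} :=
  'X^7 - 2%:R *: 'X^6 - 4%:R *: 'X^5 + 8%:R *: 'X^4 + 4%:R *: 'X^3
  - 7%:R *: 'X^2 + 2%:R *: 'X - 7%:P.

Fixpoint Qtriple (k : nat) : {poly int} * {poly int} * {poly int} :=
  match k with
  | 0%N => (Q0, Q1, Q2)
  | k'.+1 => let: (a, b, c) := Qtriple k' in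
             (b, c, ('X^2 - 1) * (c - b) + a)
  end.

(* Qk k = q_{-(2k+1)}; satisfies Qk (k+3) = (w^2-1)(Qk (k+2) - Qk (k+1)) + Qk k,
   i.e. q_n = (w^2-1)(q_{n+2} - q_{n+4}) + q_{n+6}. *)
Definition Qk (k : nat) : {poly int} := (Qtriple k).1.1.

(* q n for odd n <= -1 ; n = -(2k+1) so k = (-n-1)/2. Values at other n are junk. *)
Definition q (n : int) : {poly int} := Qk `|(- n - 1) %/ 2|%Z%N.

(* Write E_k = Q_{k+1} - Q_k for the consecutive differences of the
   sequence Q_k = q_{-(2k+1)}.  The defining recurrence of q becomes the
   Chebyshev-type recurrence E_{k+2} = c E_{k+1} - E_k with c = w^2 - 2, and
   three steps of it give E_{k+6} = (c^3 - 3c) E_{k+3} - E_k.  The statement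
   asks that L(E_{3j+2}) be divisible by 3, where L p = p + D p' with
   D = w^2 - 1.  Modulo 3 the operator L commutes with multiplication by
   c^3 - 3c (because (c^3)' = 3c^2c'), so divisibility of L by 3 propagates along
   every third term of the sequence.  It thus suffices to check two seeds: the
   "previous" difference E_{-1} = (w - 2) D, for which L E_{-1} = 3D(w^2 - w - 1),
   and E_2 = (c^3 - 3c + 1) E_{-1}, which reduces to the first seed. *)
From HB Require Import structures.
From mathcomp Require Import all_boot all_order all_algebra.
From mathcomp Require Import zify ring.
Set Implicit Arguments. Unset Strict Implicit. Unset Printing Implicit Defensive.
Import GRing.Theory.
Local Open Scope ring_scope.

Section Multiples3.
Variable R : comNzRingType.

Definition mult3 (x : R) : Prop := exists y, x = y *+ 3.

Lemma mult3_nat (y : R) : mult3 (y *+ 3).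
Proof. by exists y. Qed.

Lemma mult3D (x y : R) : mult3 x -> mult3 y -> mult3 (x + y).
Proof. by move=> [a ->] [b ->]; exists (a + b); rewrite mulrnDl. Qed.

Lemma mult3N (x : R) : mult3 x -> mult3 (- x).
Proof. by move=> [a ->]; exists (- a); rewrite mulNrn. Qed.

Lemma mult3Ml (a x : R) : mult3 x -> mult3 (a * x).
Proof. by move=> [b ->]; exists (a * b); rewrite mulrnAr. Qed.

End Multiples3.

Section ThreeStepRecurrence.
Variables (R : comNzRingType) (c : R) (e : nat -> R).
Hypothesis e_rec : forall k, e k.+2 = c * e k.+1 - e k.

Lemma rec_three_steps k : e (k + 6)%N = (c ^+ 3 - c *+ 3) * e (k + 3)%N - e k.
Proof.
rewrite !addnS !addn0 !e_rec.
move: (e k.+1) (e k) => a b; ring.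
Qed.

End ThreeStepRecurrence.

Section TwistedDerivative.
Variables (R : comNzRingType) (D : {poly R}).

Definition Lop (p : {poly R}) : {poly R} := p + D * p^`().

Lemma LopB (p r : {poly R}) : Lop (p - r) = Lop p - Lop r.
Proof. by rewrite /Lop derivB; ring. Qed.

Lemma LopN (p : {poly R}) : Lop (- p) = - Lop p.
Proof. by rewrite /Lop derivN; ring. Qed.

(* Lop commutes with multiplication by c^3 - 3c up to a multiple of 3, since
   the derivative of c^3 is 3 c^2 c'. *)
Lemma Lop_cheb (c e : {poly R}) :
  Lop ((c ^+ 3 - c *+ 3) * e) =
  c ^+ 3 * Lop e + (D * (c^`() * c ^+ 2 * e) - Lop (c * e)) *+ 3.
Proof.
rewrite /Lop !derivE.
move: (e^`()) (c^`()) => de dc; ring.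
Qed.

Lemma Lop_step_mult3 (c e3 e0 : {poly R}) :
  mult3 (Lop e3) -> mult3 (Lop e0) -> mult3 (Lop ((c ^+ 3 - c *+ 3) * e3 - e0)).
Proof.
move=> h3 h0; rewrite LopB Lop_cheb addrAC.
exact: mult3D (mult3D (mult3Ml _ h3) (mult3N h0)) (mult3_nat _).
Qed.

Lemma Lop_mult3_every_third (c : {poly R}) (e : nat -> {poly R}) :
  (forall k, e k.+2 = c * e k.+1 - e k) ->
  mult3 (Lop (e 0)) -> mult3 (Lop (e 3)) -> forall j, mult3 (Lop (e (3 * j)%N)).
Proof.
move=> e_rec h0 h3 j.
suff [] : mult3 (Lop (e (3 * j)%N)) /\ mult3 (Lop (e (3 * j + 3)%N)) by [].
elim: j => [|j [IHj IHj3]]; first by [].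
have -> : (3 * j.+1 = 3 * j + 3)%N by lia.
split => //; rewrite -addnA.
by rewrite (rec_three_steps e_rec); apply: Lop_step_mult3.
Qed.

End TwistedDerivative.

Definition D : {poly int} := 'X^2 - 1.
Definition c : {poly int} := 'X^2 - 2%:P.

Lemma Qk_rec k : Qk k.+3 = D * (Qk k.+2 - Qk k.+1) + Qk k.
Proof. by rewrite /Qk /=; case: (Qtriple k) => [[a b] e]. Qed.

Definition E (k : nat) : {poly int} := Qk k.+1 - Qk k.

Lemma E_rec k : E k.+2 = c * E k.+1 - E k.
Proof. by rewrite /E Qk_rec /c /D; ring. Qed.

(* The difference one step before E 0, continuing the recurrence backwards. *)
Definition Eprev : {poly int} := ('X - 2%:P) * D.

Definition Eext (k : nat) : {poly int} := if k is k'.+1 then E k' else Eprev.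

Lemma E1_rec : E 1 = c * E 0 - Eprev.
Proof.
rewrite /E /Eprev /c /D /Qk /= /Q0 /Q1 /Q2 -!mul_polyC; ring.
Qed.

Lemma Eext_rec k : Eext k.+2 = c * Eext k.+1 - Eext k.
Proof. by case: k => [|k]; [exact: E1_rec | exact: E_rec]. Qed.

Lemma E2_Eprev : E 2 = (c ^+ 3 - c *+ 3) * Eprev - (- Eprev).
Proof.
rewrite /E Qk_rec /Eprev /c /D /Qk /= /Q0 /Q1 /Q2 -!mul_polyC; ring.
Qed.

Lemma Lop_Eprev : Lop D Eprev = (D * ('X^2 - 'X - 1)) *+ 3.
Proof. by rewrite /Lop /Eprev /D !derivE; ring. Qed.

Lemma Lop_Eext_mult3 j : mult3 (Lop D (Eext (3 * j)%N)).
Proof.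
have seed : mult3 (Lop D Eprev) by rewrite Lop_Eprev; apply: mult3_nat.
apply: (Lop_mult3_every_third Eext_rec) => //=.
by rewrite E2_Eprev; apply: Lop_step_mult3 => //; rewrite LopN; apply: mult3N.
Qed.

Lemma q_odd (k : nat) : q (- (2 * k + 1)%:Z) = Qk k.
Proof. by rewrite /q; congr Qk; lia. Qed.

Lemma coef_mult3 (p : {poly int}) i : mult3 p -> (3 %| p`_i)%Z.
Proof. by move=> [r ->]; rewrite coefMn; apply/dvdzP; exists r`_i; rewrite mulr_natr. Qed.

Theorem lemma5p2 (n : int) :
  ~~ (2 %| n)%Z -> n <= -9 -> (3 %| n)%Z ->
  forall i : nat,
    (3 %| (q (n + 2) - q (n + 4) + ('X^2 - 1) * ((q (n + 2))^`() - (q (n + 4))^`()))`_i)%Z.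
Proof.
move=> n_odd n_le n_3 i.
have [j n_eq] : exists j : nat, n = - (6 * j + 9)%:Z.
  by exists `|((- n - 9) %/ 6)%Z|%N; lia.
have -> : n + 2 = - (2 * (3 * j).+3 + 1)%:Z by lia.
have -> : n + 4 = - (2 * (3 * j).+2 + 1)%:Z by lia.
rewrite !q_odd -derivB; apply: coef_mult3.
by have := Lop_Eext_mult3 j.+1; rewrite mulnS.
Qed.
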